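(* For real $z\ge 10$ let $$c_2(z)=\sum_{\substack{n_1,n_2,n_3,n_4\le z\\ \sqrt{n_1}+\sqrt{n_2}=\sqrt{n_3}+\sqrt{n_4}}}\frac{d(n_1)d(n_2)d(n_3)d(n_4)\,(\sqrt{n_1}+\sqrt{n_2}+\sqrt{n_3}+\sqrt{n_4})}{(n_1n_2n_3n_4)^{3/4}},$$ the sum being over positive integers. Then $c_2(z)\ll\log^4 z$ uniformly for $z\ge 10$.
   Context: $d(n)$ denotes the number of positive divisors of $n$. $f\ll g$ means $|f|\le Cg$ for some absolute positive constant $C$. *)

From Stdlib Require Import Reals Lra Lia Arith List.
Import ListNotations.
Open Scope R_scope.

Definition ndiv (n : nat) : nat :=
  length (filter (fun k => Nat.eqb (n mod k) 0) (seq 1 n)).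

Definition sumR (l : list nat) (f : nat -> R) : R :=
  fold_right (fun n acc => f n + acc) 0 l.

(* floor of z as a natural (z >= 0): positive integers n <= z are 1..floor z *)
Definition nfloor (z : R) : nat := Z.to_nat (Int_part z).

Definition c2_term (n1 n2 n3 n4 : nat) : R :=
  if Req_EM_T (sqrt (INR n1) + sqrt (INR n2)) (sqrt (INR n3) + sqrt (INR n4))
  then INR (ndiv n1 * ndiv n2 * ndiv n3 * ndiv n4)
       * (sqrt (INR n1) + sqrt (INR n2) + sqrt (INR n3) + sqrt (INR n4))
       / Rpower (INR (n1 * n2 * n3 * n4)) (3 / 4)
  else 0.

Definition c2 (z : R) : R :=
  let N := nfloor z in
  sumR (seq 1 N) (fun n1 => sumR (seq 1 N) (fun n2 =>
  sumR (seq 1 N) (fun n3 => sumR (seq 1 N) (fun n4 => c2_term n1 n2 n3 n4)))).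

(* If sqrt n1 + sqrt n2 = sqrt n3 + sqrt n4
   then either {n3, n4} = {n1, n2} (the diagonal), or all four numbers share
   their squarefree part: n_i = q r_i^2 with r1 + r2 = r3 + r4.  A diagonal
   term is G(n1, n2) = d(n1)^2 d(n2)^2 * 2 (sqrt n1 + sqrt n2) / (n1 n2)^(3/2)
   (diag_weight).  Using d(q r^2) <= d(q) d(r)^2 and d(r)^2 <= 4 r, every
   off-diagonal term is at most  B(q) * 8 G(r1, r2) * (V(r3) + V(r4)),  where
   B(q) = d(q)^4 q^(-5/2) (core_weight) and V(r) = d(r)^2 r^(-3/2)
   (side_weight).  Summing over n_i <= N, resp. over q, r_i <= N,
     c_2 <= SG * (2 + 16 * SV * SB),   SG = 4 * SH * SV,
   with SG, SV, SB the sums of G, V, B and SH = sum d(n)^2 / n.  Writing d(a)^2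
   as the number of pairs (x, y) with lcm(x, y) | a gives, for a completely
   multiplicative weight w,  sum d(a)^2 w(a) <= (sum w)^4;  hence
   SH <= (1 + log N)^4, SV <= zeta(3/2)^4 and SB <= zeta(5/4)^8. *)

From Stdlib Require Import Reals Lra Lia Arith List ZArith Classical.
Import ListNotations.
Open Scope R_scope.

Lemma sumR_cons x l f : sumR (x :: l) f = f x + sumR l f.
Proof. reflexivity. Qed.

Lemma sumR_app l1 l2 f : sumR (l1 ++ l2) f = sumR l1 f + sumR l2 f.
Proof. induction l1; simpl; [ring | rewrite IHl1; ring]. Qed.

Lemma sumR_ext l f g : (forall x, In x l -> f x = g x) -> sumR l f = sumR l g.
Proof. induction l; simpl; intros H; auto. rewrite H, IHl; auto. Qed.

Lemma sumR_le l f g : (forall x, In x l -> f x <= g x) -> sumR l f <= sumR l g.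
Proof. induction l; simpl; intros H; [lra|]. apply Rplus_le_compat; auto. Qed.

Lemma sumR_nonneg l f : (forall x, In x l -> 0 <= f x) -> 0 <= sumR l f.
Proof. induction l; simpl; intros H; [lra|]. apply Rplus_le_le_0_compat; auto. Qed.

Lemma sumR_plus l f g : sumR l (fun x => f x + g x) = sumR l f + sumR l g.
Proof. induction l; simpl; [ring | rewrite IHl; ring]. Qed.

Lemma sumR_scal l c f : sumR l (fun x => c * f x) = c * sumR l f.
Proof. induction l; simpl; [ring | rewrite IHl; ring]. Qed.

Lemma sumR_scal_r l c f : sumR l (fun x => f x * c) = sumR l f * c.
Proof. induction l; simpl; [ring | rewrite IHl; ring]. Qed.

Lemma sumR_zero l : sumR l (fun _ => 0) = 0.
Proof. induction l; simpl; [ring | rewrite IHl; ring]. Qed.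

Lemma sumR_one l : sumR l (fun _ => 1) = INR (length l).
Proof. induction l; [reflexivity|]. rewrite sumR_cons. cbn [length]. rewrite S_INR, IHl; ring. Qed.

Lemma sumR_swap (l m : list nat) (F : nat -> nat -> R) :
  sumR l (fun x => sumR m (fun y => F x y)) = sumR m (fun y => sumR l (fun x => F x y)).
Proof.
  induction l; simpl.
  - rewrite sumR_zero; auto.
  - rewrite IHl, <- sumR_plus. reflexivity.
Qed.

Lemma sumR_mul l m f g :
  sumR l f * sumR m g = sumR l (fun x => sumR m (fun y => f x * g y)).
Proof.
  rewrite <- sumR_scal_r. apply sumR_ext; intros. rewrite <- sumR_scal. reflexivity.
Qed.

Lemma sumR_point (l : list nat) f x :
  In x l -> (forall y, In y l -> 0 <= f y) -> f x <= sumR l f.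
Proof.
  induction l; simpl; intros Hx H; [tauto|].
  destruct Hx as [<-|Hx].
  - assert (0 <= sumR l f) by (apply sumR_nonneg; auto). lra.
  - assert (f x <= sumR l f) by (apply IHl; auto). specialize (H a (or_introl eq_refl)). lra.
Qed.

Lemma sumR_unique (l : list nat) (P : nat -> bool) (Y : R) :
  NoDup l -> 0 <= Y ->
  (forall x y, In x l -> In y l -> P x = true -> P y = true -> x = y) ->
  sumR l (fun x => if P x then Y else 0) <= Y.
Proof.
  induction l as [|a l IH]; simpl; intros ND HY HU; [lra|].
  inversion ND; subst.
  destruct (P a) eqn:Pa.
  - assert (sumR l (fun x => if P x then Y else 0) = 0).
    { transitivity (sumR l (fun _ => 0)); [|apply sumR_zero].
      apply sumR_ext. intros x Hx. destruct (P x) eqn:Px; auto.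
      exfalso. assert (x = a) by (apply HU; auto). subst; tauto. }
    lra.
  - assert (sumR l (fun x => if P x then Y else 0) <= Y) by (apply IH; auto).
    lra.
Qed.

Lemma sumR_sq_le l f : (forall x, In x l -> 0 <= f x) ->
  sumR l (fun x => f x * f x) <= sumR l f * sumR l f.
Proof.
  induction l as [|a l IH]; simpl; intros H; [lra|].
  assert (Ha : 0 <= f a) by auto.
  assert (Hl : 0 <= sumR l f) by (apply sumR_nonneg; auto).
  assert (sumR l (fun x => f x * f x) <= sumR l f * sumR l f) by auto.
  nra.
Qed.

Lemma in_seq1 x N : In x (seq 1 N) <-> (1 <= x <= N)%nat.
Proof. rewrite in_seq. lia. Qed.

Lemma ind_nonneg (b : bool) : 0 <= (if b then 1 else 0).
Proof. destruct b; lra. Qed.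
(** * The divisor function *)

Definition dvdb (k n : nat) : bool := Nat.eqb (n mod k) 0.

Definition div_count (N n : nat) : R := sumR (seq 1 N) (fun k => if dvdb k n then 1 else 0).
Definition dR (n : nat) : R := INR (ndiv n).

Lemma dvdb_spec k n : (1 <= k)%nat -> (dvdb k n = true <-> Nat.divide k n).
Proof. intros Hk. unfold dvdb. rewrite Nat.eqb_eq. apply Nat.Lcm0.mod_divide. Qed.

Lemma dR_nonneg n : 0 <= dR n.
Proof. apply pos_INR. Qed.

Lemma length_filter_sum (p : nat -> bool) l :
  INR (length (filter p l)) = sumR l (fun k => if p k then 1 else 0).
Proof.
  induction l; [reflexivity|]. cbn [filter]. rewrite sumR_cons.
  destruct (p a); [cbn [length]; rewrite S_INR, IHl; ring | rewrite IHl; ring].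
Qed.

Lemma dR_count n N : (1 <= n <= N)%nat -> dR n = div_count N n.
Proof.
  intros H. unfold dR, div_count, ndiv. rewrite length_filter_sum.
  replace N with (n + (N - n))%nat by lia. rewrite seq_app, sumR_app.
  rewrite (sumR_ext (seq (1 + n) (N - n)) _ (fun _ => 0)).
  - rewrite sumR_zero, Rplus_0_r. reflexivity.
  - intros k Hk. apply in_seq in Hk. unfold dvdb. rewrite Nat.mod_small by lia.
    destruct n; [lia|]. reflexivity.
Qed.

Lemma divisor_of_product e m n : (1 <= e)%nat -> (1 <= m)%nat -> Nat.divide e (m * n) ->
  Nat.divide (Nat.gcd e m) m /\ Nat.divide (e / Nat.gcd e m) n /\
  e = (Nat.gcd e m * (e / Nat.gcd e m))%nat /\ (1 <= Nat.gcd e m)%nat.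
Proof.
  intros He Hm Hd.
  set (g := Nat.gcd e m).
  assert (Hg0 : g <> 0%nat). { unfold g. intro H0. apply Nat.gcd_eq_0 in H0. lia. }
  destruct (Nat.gcd_divide_l e m) as [e' He']. fold g in He'.
  destruct (Nat.gcd_divide_r e m) as [m' Hm']. fold g in Hm'.
  assert (Hcop : Nat.gcd (e / g) (m / g) = 1%nat) by (apply Nat.gcd_div_gcd; auto).
  rewrite He' in Hcop at 1. rewrite Hm' in Hcop. rewrite !Nat.div_mul in Hcop by auto.
  rewrite He'. rewrite Nat.div_mul by auto.
  split; [apply Nat.gcd_divide_r|]. split; [|split; [ring|lia]].
  apply (Nat.gauss _ m'); auto.
  rewrite He', Hm' in Hd. destruct Hd as [k Hk].
  exists k. apply (Nat.mul_cancel_r _ _ g); auto.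
  replace (m' * n * g)%nat with (m' * g * n)%nat by ring. rewrite Hk. ring.
Qed.

Lemma divisor_indicator_split m n M e :
  (1 <= m)%nat -> (1 <= n)%nat -> (m * n <= M)%nat -> (1 <= e <= M)%nat ->
  (if dvdb e (m * n) then 1 else 0) <=
  sumR (seq 1 M) (fun x => sumR (seq 1 M) (fun y =>
     ((if dvdb x m then 1 else 0) * (if dvdb y n then 1 else 0)) *
     (if Nat.eqb e (x * y) then 1 else 0))).
Proof.
  intros Hm Hn HM He.
  assert (Hterm : forall x y, 0 <= ((if dvdb x m then 1 else 0) * (if dvdb y n then 1 else 0)) *
                                  (if Nat.eqb e (x * y) then 1 else 0))
    by (intros; apply Rmult_le_pos; [apply Rmult_le_pos|]; apply ind_nonneg).
  destruct (dvdb e (m * n)) eqn:D;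
    [|apply sumR_nonneg; intros; apply sumR_nonneg; intros; apply Hterm].
  apply dvdb_spec in D; [|lia].
  destruct (divisor_of_product e m n) as (H1 & H2 & H3 & H4); try lia; auto.
  set (x := Nat.gcd e m) in *. set (y := (e / x)%nat) in *.
  assert (Hx : (x <= m)%nat) by (apply Nat.divide_pos_le; lia || auto).
  assert (Hy1 : (1 <= y)%nat) by (destruct y; lia).
  assert (Hy : (y <= n)%nat) by (apply Nat.divide_pos_le; lia || auto).
  eapply Rle_trans; [|apply (sumR_point _ _ x);
    [apply in_seq1; nia | intros; apply sumR_nonneg; intros; apply Hterm]].
  eapply Rle_trans; [|apply (sumR_point _ _ y); [apply in_seq1; nia | intros; apply Hterm]].
  rewrite (proj2 (dvdb_spec x m ltac:(lia)) H1), (proj2 (dvdb_spec y n Hy1) H2).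
  rewrite (proj2 (Nat.eqb_eq _ _) H3). lra.
Qed.

Lemma dR_submult m n : (1 <= m)%nat -> (1 <= n)%nat -> dR (m * n) <= dR m * dR n.
Proof.
  intros Hm Hn. set (M := (m * n)%nat).
  rewrite (dR_count M M), (dR_count m M), (dR_count n M) by (unfold M; nia).
  unfold div_count. rewrite sumR_mul.
  eapply Rle_trans; [apply sumR_le; intros e He; apply in_seq1 in He;
    apply (divisor_indicator_split m n M e); unfold M; lia|].
  rewrite sumR_swap. apply sumR_le. intros x Hx.
  rewrite sumR_swap. apply sumR_le. intros y Hy.
  rewrite sumR_scal.
  assert (sumR (seq 1 M) (fun e => if Nat.eqb e (x * y) then 1 else 0) <= 1).
  { apply sumR_unique; [apply seq_NoDup|lra|].
    intros a b _ _ Ha Hb. apply Nat.eqb_eq in Ha, Hb. lia. }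
  assert (0 <= (if dvdb x m then 1 else 0) * (if dvdb y n then 1 else 0))
    by (apply Rmult_le_pos; apply ind_nonneg).
  nra.
Qed.

Lemma dR_square_factor q r : (1 <= q)%nat -> (1 <= r)%nat -> dR (q * (r * r)) <= dR q * (dR r * dR r).
Proof.
  intros. eapply Rle_trans; [apply dR_submult; nia|].
  apply Rmult_le_compat_l; [apply dR_nonneg|]. apply dR_submult; lia.
Qed.

Lemma count_squares n :
  sumR (seq 1 n) (fun j => if Nat.leb (j * j) n then 1 else 0) = INR (Nat.sqrt n).
Proof.
  set (s := Nat.sqrt n).
  assert (Hs : (s <= n)%nat) by apply Nat.sqrt_le_lin.
  destruct (Nat.sqrt_spec n) as [S1 S2]; [lia|]. fold s in S1, S2.
  replace n with (s + (n - s))%nat at 1 by lia. rewrite seq_app, sumR_app.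
  rewrite (sumR_ext (seq 1 s) _ (fun _ => 1)).
  rewrite (sumR_ext (seq (1 + s) (n - s)) _ (fun _ => 0)).
  - rewrite sumR_zero, sumR_one, length_seq. ring.
  - intros j Hj. apply in_seq in Hj. destruct (Nat.leb_spec (j*j) n); auto. nia.
  - intros j Hj. apply in_seq in Hj. destruct (Nat.leb_spec (j*j) n); auto. nia.
Qed.

(* Every divisor k of n is either small (k^2 <= n) or the cofactor n / j of a
   small divisor j. *)
Lemma divisor_indicator_pair n k : (1 <= k <= n)%nat ->
  (if dvdb k n then 1 else 0) <= (if Nat.leb (k * k) n then 1 else 0) +
    sumR (seq 1 n) (fun j => (if Nat.leb (j * j) n then 1 else 0) *
                             (if Nat.eqb (j * k) n then 1 else 0)).
Proof.
  intros Hk.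
  assert (0 <= sumR (seq 1 n) (fun j => (if Nat.leb (j * j) n then 1 else 0) *
                                        (if Nat.eqb (j * k) n then 1 else 0)))
    by (apply sumR_nonneg; intros; apply Rmult_le_pos; apply ind_nonneg).
  destruct (Nat.leb_spec (k * k) n). { destruct (dvdb k n); lra. }
  destruct (dvdb k n) eqn:D; [|lra].
  apply dvdb_spec in D; [|lia]. destruct D as [j Hj].
  assert (Hj1 : (1 <= j)%nat) by (destruct j; lia).
  assert (Hjk : (j < k)%nat) by nia.
  eapply Rle_trans; [|apply Rplus_le_compat_l; apply (sumR_point _ _ j);
    [apply in_seq1; nia | intros; apply Rmult_le_pos; apply ind_nonneg]].
  cbv beta. rewrite (proj2 (Nat.leb_le (j * j) n)) by nia.
  rewrite (proj2 (Nat.eqb_eq (j * k) n)) by lia. lra.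
Qed.

Lemma dR_sqrt_bound n : (1 <= n)%nat -> dR n <= 2 * sqrt (INR n).
Proof.
  intros Hn. rewrite (dR_count n n) by lia. unfold div_count.
  eapply Rle_trans;
    [apply sumR_le; intros k Hk; apply in_seq1 in Hk; apply divisor_indicator_pair; lia|].
  rewrite sumR_plus, sumR_swap, count_squares.
  assert (sumR (seq 1 n) (fun j => sumR (seq 1 n) (fun k =>
            (if Nat.leb (j * j) n then 1 else 0) * (if Nat.eqb (j * k) n then 1 else 0)))
          <= INR (Nat.sqrt n)).
  { rewrite <- count_squares. apply sumR_le. intros j Hj. apply in_seq1 in Hj.
    rewrite sumR_scal.
    assert (sumR (seq 1 n) (fun k => if Nat.eqb (j * k) n then 1 else 0) <= 1).
    { apply sumR_unique; [apply seq_NoDup|lra|].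
      intros a b _ _ Ha Hb. apply Nat.eqb_eq in Ha, Hb. nia. }
    pose proof (ind_nonneg (Nat.leb (j * j) n)). nra. }
  assert (INR (Nat.sqrt n) <= sqrt (INR n)).
  { rewrite <- (sqrt_square (INR (Nat.sqrt n))) by apply pos_INR.
    apply sqrt_le_1_alt. rewrite <- mult_INR. apply le_INR.
    destruct (Nat.sqrt_spec n); lia. }
  lra.
Qed.

Lemma dR_sq_bound n : (1 <= n)%nat -> dR n * dR n <= 4 * INR n.
Proof.
  intros Hn. pose proof (dR_sqrt_bound n Hn). pose proof (dR_nonneg n).
  pose proof (sqrt_sqrt (INR n) (pos_INR n)). pose proof (sqrt_pos (INR n)). nra.
Qed.
(** * Divisor moments against completely multiplicative weights *)

Lemma lcm_gcd x y : (Nat.lcm x y * Nat.gcd x y = x * y)%nat.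
Proof.
  unfold Nat.lcm. destruct (Nat.gcd_divide_r x y) as [k Hk].
  destruct (Nat.eq_dec (Nat.gcd x y) 0) as [E|E].
  - rewrite E. apply Nat.gcd_eq_0 in E. destruct E; subst. simpl. lia.
  - set (g := Nat.gcd x y) in *. rewrite Hk. rewrite Nat.div_mul by auto. ring.
Qed.

Lemma lcm_pos x y : (1 <= x)%nat -> (1 <= y)%nat -> (1 <= Nat.lcm x y)%nat.
Proof.
  intros. destruct (Nat.lcm x y) eqn:E; [|lia]. apply Nat.lcm_eq_0 in E. lia.
Qed.

Lemma gcd_pos x y : (1 <= x)%nat -> (1 <= Nat.gcd x y)%nat.
Proof. intros. destruct (Nat.gcd x y) eqn:E; [|lia]. apply Nat.gcd_eq_0 in E. lia. Qed.

Lemma dvdb_lcm x y a : (1 <= x)%nat -> (1 <= y)%nat ->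
  (if dvdb x a then 1 else 0) * (if dvdb y a then 1 else 0) =
  (if dvdb (Nat.lcm x y) a then 1 else 0).
Proof.
  intros Hx Hy. pose proof (lcm_pos x y Hx Hy).
  destruct (dvdb (Nat.lcm x y) a) eqn:E.
  - apply dvdb_spec in E; auto. apply Nat.lcm_divide_iff in E as [E1 E2].
    apply dvdb_spec in E1; auto. apply dvdb_spec in E2; auto. rewrite E1, E2; ring.
  - destruct (dvdb x a) eqn:E1; destruct (dvdb y a) eqn:E2; try ring.
    apply dvdb_spec in E1; auto. apply dvdb_spec in E2; auto.
    assert (Nat.divide (Nat.lcm x y) a) by (apply Nat.lcm_divide_iff; auto).
    apply dvdb_spec in H0; auto. congruence.
Qed.

Lemma dR_sq_lcm_count a N : (1 <= a <= N)%nat ->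
  dR a * dR a = sumR (seq 1 N) (fun x => sumR (seq 1 N) (fun y =>
                  if dvdb (Nat.lcm x y) a then 1 else 0)).
Proof.
  intros Ha. rewrite (dR_count a N) by lia. unfold div_count. rewrite sumR_mul.
  apply sumR_ext. intros x Hx. apply in_seq1 in Hx.
  apply sumR_ext. intros y Hy. apply in_seq1 in Hy. apply dvdb_lcm; lia.
Qed.

Section Weights.
Variable w : nat -> R.
Hypothesis w_pos : forall n, (1 <= n)%nat -> 0 < w n.
Hypothesis w_mul : forall m n, (1 <= m)%nat -> (1 <= n)%nat -> w (m * n)%nat = w m * w n.
Variable N : nat.
Let Z := sumR (seq 1 N) w.

Lemma weight_sum_nonneg : 0 <= Z.
Proof. apply sumR_nonneg. intros x Hx. apply in_seq1 in Hx. left; apply w_pos; lia. Qed.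

Lemma weighted_ind_nonneg (b : bool) q : (1 <= q)%nat -> 0 <= (if b then 1 else 0) * w q.
Proof. intros. apply Rmult_le_pos; [apply ind_nonneg | left; apply w_pos; auto]. Qed.

Lemma multiples_weight m : (1 <= m)%nat ->
  sumR (seq 1 N) (fun q => (if dvdb m q then 1 else 0) * w q) <= w m * Z.
Proof.
  intros Hm.
  apply Rle_trans with (sumR (seq 1 N) (fun q => sumR (seq 1 N) (fun k =>
     (if Nat.eqb q (m * k) then 1 else 0) * (w m * w k)))).
  - apply sumR_le. intros q Hq. apply in_seq1 in Hq.
    assert (Hnn : forall k, In k (seq 1 N) ->
              0 <= (if Nat.eqb q (m * k) then 1 else 0) * (w m * w k)).
    { intros k Hk. apply in_seq1 in Hk. rewrite <- w_mul by lia.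
      apply weighted_ind_nonneg. nia. }
    destruct (dvdb m q) eqn:D; [|rewrite Rmult_0_l; apply sumR_nonneg; auto].
    apply dvdb_spec in D; auto. destruct D as [k Hk].
    assert (1 <= k)%nat by (destruct k; lia).
    eapply Rle_trans; [|apply (sumR_point _ _ k); [apply in_seq1; nia | auto]].
    cbv beta. rewrite (proj2 (Nat.eqb_eq q (m * k))) by lia. rewrite <- w_mul by lia.
    rewrite Hk, Nat.mul_comm. lra.
  - rewrite sumR_swap. unfold Z. rewrite <- sumR_scal. apply sumR_le.
    intros k Hk. apply in_seq1 in Hk. rewrite sumR_scal_r.
    assert (sumR (seq 1 N) (fun q => if Nat.eqb q (m * k) then 1 else 0) <= 1).
    { apply sumR_unique; [apply seq_NoDup|lra|]. intros a b _ _ Ha Hb.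
      apply Nat.eqb_eq in Ha, Hb. lia. }
    assert (0 < w m * w k) by (apply Rmult_lt_0_compat; apply w_pos; lia).
    nra.
Qed.

Definition common_divisor_weight (h x y : nat) : R :=
  / w h * (((if dvdb h x then 1 else 0) * w x) * ((if dvdb h y then 1 else 0) * w y)).

Lemma common_divisor_weight_nonneg h x y :
  (1 <= h)%nat -> (1 <= x)%nat -> (1 <= y)%nat -> 0 <= common_divisor_weight h x y.
Proof.
  intros. unfold common_divisor_weight. apply Rmult_le_pos.
  - left; apply Rinv_0_lt_compat, w_pos; auto.
  - apply Rmult_le_pos; apply weighted_ind_nonneg; auto.
Qed.

(* w(lcm(x, y)) = w(x) w(y) / w(gcd(x, y)) is the term h = gcd(x, y). *)
Lemma lcm_weight_le x y : (1 <= x <= N)%nat -> (1 <= y <= N)%nat ->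
  w (Nat.lcm x y) <= sumR (seq 1 N) (fun h => common_divisor_weight h x y).
Proof.
  intros Hx Hy. set (g := Nat.gcd x y).
  assert (Hg : (1 <= g)%nat) by (apply gcd_pos; lia).
  assert (Hgx : (g <= x)%nat) by (apply Nat.divide_pos_le; [lia|apply Nat.gcd_divide_l]).
  eapply Rle_trans; [|apply (sumR_point _ _ g); [apply in_seq1; lia |
    intros h Hh; apply in_seq1 in Hh; apply common_divisor_weight_nonneg; lia]].
  unfold common_divisor_weight.
  rewrite (proj2 (dvdb_spec g x Hg) (Nat.gcd_divide_l x y)).
  rewrite (proj2 (dvdb_spec g y Hg) (Nat.gcd_divide_r x y)).
  assert (w (Nat.lcm x y) * w g = w x * w y).
  { rewrite <- !w_mul by (try apply lcm_pos; lia). unfold g. rewrite lcm_gcd. auto. }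
  pose proof (w_pos g Hg).
  apply Req_le. field_simplify_eq; [|lra]. lra.
Qed.

(* Summing over x and y first, each h contributes at most (w(h) Z)^2 / w(h),
   so  sum_{x,y} w(lcm(x, y)) <= Z^3. *)
Lemma lcm_weight_sum :
  sumR (seq 1 N) (fun x => sumR (seq 1 N) (fun y => w (Nat.lcm x y))) <= Z * Z * Z.
Proof.
  apply Rle_trans with (sumR (seq 1 N) (fun x => sumR (seq 1 N) (fun y =>
                          sumR (seq 1 N) (fun h => common_divisor_weight h x y)))).
  { apply sumR_le. intros x Hx. apply sumR_le. intros y Hy.
    apply in_seq1 in Hx, Hy. apply lcm_weight_le; auto. }
  rewrite (sumR_ext _ _ (fun x => sumR (seq 1 N) (fun h => sumR (seq 1 N) (fun y =>
             common_divisor_weight h x y)))) by (intros; apply sumR_swap).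
  rewrite sumR_swap.
  apply Rle_trans with (sumR (seq 1 N) (fun h => / w h * ((w h * Z) * (w h * Z)))).
  - apply sumR_le. intros h Hh. apply in_seq1 in Hh. unfold common_divisor_weight.
    rewrite (sumR_ext _ _ (fun x => / w h * ((if dvdb h x then 1 else 0) * w x) *
        sumR (seq 1 N) (fun y => (if dvdb h y then 1 else 0) * w y))).
    2: { intros. rewrite <- sumR_scal. apply sumR_ext. intros. ring. }
    rewrite sumR_scal_r, sumR_scal.
    pose proof (multiples_weight h ltac:(lia)). pose proof (w_pos h ltac:(lia)).
    assert (0 <= sumR (seq 1 N) (fun y => (if dvdb h y then 1 else 0) * w y)).
    { apply sumR_nonneg. intros y Hy. apply in_seq1 in Hy. apply weighted_ind_nonneg; lia. }
    assert (0 < / w h) by (apply Rinv_0_lt_compat; auto).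
    rewrite Rmult_assoc. apply Rmult_le_compat_l; [lra|]. apply Rmult_le_compat; auto.
  - rewrite (sumR_ext _ _ (fun h => (Z * Z) * w h)).
    + rewrite sumR_scal. unfold Z at 3. lra.
    + intros h Hh. apply in_seq1 in Hh. pose proof (w_pos h ltac:(lia)). field. lra.
Qed.

Lemma divisor_sq_moment : sumR (seq 1 N) (fun a => dR a * dR a * w a) <= Z * Z * Z * Z.
Proof.
  rewrite (sumR_ext _ _ (fun a => sumR (seq 1 N) (fun x => sumR (seq 1 N) (fun y =>
             (if dvdb (Nat.lcm x y) a then 1 else 0) * w a)))).
  2: { intros a Ha. apply in_seq1 in Ha. rewrite (dR_sq_lcm_count a N) by lia.
       rewrite <- sumR_scal_r. apply sumR_ext. intros. symmetry. apply sumR_scal_r. }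
  rewrite sumR_swap.
  apply Rle_trans with (sumR (seq 1 N) (fun x => sumR (seq 1 N) (fun y => w (Nat.lcm x y) * Z))).
  - apply sumR_le. intros x Hx. apply in_seq1 in Hx. rewrite sumR_swap. apply sumR_le.
    intros y Hy. apply in_seq1 in Hy. apply multiples_weight. apply lcm_pos; lia.
  - rewrite (sumR_ext _ _ (fun x => sumR (seq 1 N) (fun y => w (Nat.lcm x y)) * Z))
      by (intros; apply sumR_scal_r).
    rewrite sumR_scal_r. pose proof lcm_weight_sum. pose proof weight_sum_nonneg.
    apply (Rmult_le_compat_r Z) in H; [lra|auto].
Qed.
End Weights.
(** * Power weights n^(-s) and zeta-type sums *)

Definition npw (s : R) (n : nat) : R := Rpower (INR n) (- s).

Lemma Rpower_pos x y : 0 < Rpower x y.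
Proof. unfold Rpower. apply exp_pos. Qed.

Lemma Rpower_1base y : Rpower 1 y = 1.
Proof. unfold Rpower. rewrite ln_1, Rmult_0_r, exp_0; auto. Qed.

Lemma INR_pos n : (1 <= n)%nat -> 0 < INR n.
Proof. intros. apply lt_0_INR. lia. Qed.

Lemma npw_pos s n : 0 < npw s n.
Proof. apply Rpower_pos. Qed.

Lemma npw_mul s m n : (1 <= m)%nat -> (1 <= n)%nat -> npw s (m * n) = npw s m * npw s n.
Proof. intros. unfold npw. rewrite mult_INR, Rpower_mult_distr; auto; apply INR_pos; auto. Qed.

Lemma npw_double s n : npw (2 * s) n = npw s n * npw s n.
Proof. unfold npw. rewrite <- Rpower_plus. f_equal. ring. Qed.

Lemma Rpower_neg_antitone s a b : 0 <= s -> 0 < a <= b -> Rpower b (- s) <= Rpower a (- s).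
Proof.
  intros Hs Hab. rewrite !Rpower_Ropp.
  apply Rinv_le_contravar; [apply Rpower_pos|]. apply Rle_Rpower_l; auto.
Qed.

(* Integral comparison, by the mean value theorem on x^(1-s):
   sum_{n <= N} n^(-s) <= s / (s - 1) - N^(1-s) / (s - 1). *)
Lemma zeta_partial s N : 1 < s -> (1 <= N)%nat ->
  sumR (seq 1 N) (npw s) <= s / (s - 1) - Rpower (INR N) (1 - s) / (s - 1).
Proof.
  intros Hs HN. induction N as [|M IH]; [lia|].
  destruct (Nat.eq_dec M 0) as [E|E].
  - subst. cbn [seq sumR fold_right]. unfold npw. replace (INR 1) with 1 by reflexivity.
    rewrite !Rpower_1base. replace (s / (s - 1) - 1 / (s - 1)) with 1 by (field; lra). lra.
  - rewrite seq_S, sumR_app. simpl sumR at 2.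
    specialize (IH ltac:(lia)).
    assert (HM0 : 0 < INR M) by (apply INR_pos; lia).
    destruct (MVT_cor2 (fun x => Rpower x (1 - s)) (fun x => (1 - s) * Rpower x (1 - s - 1))
        (INR M) (INR M + 1)) as [c [Hc1 Hc2]]; [lra| |].
    { intros c Hc. apply derivable_pt_lim_power. lra. }
    replace (1 + M)%nat with (S M) by lia.
    replace (1 - s - 1) with (- s) in Hc1 by ring.
    replace (INR M + 1 - INR M) with 1 in Hc1 by ring.
    assert (Rpower (INR M + 1) (- s) <= Rpower c (- s)) by (apply Rpower_neg_antitone; lra).
    unfold npw at 2. rewrite !S_INR.
    apply Rle_trans with (s / (s - 1) - Rpower (INR M) (1 - s) / (s - 1) + Rpower c (- s)).
    { lra. }
    apply Req_le. field_simplify_eq; [|lra]. nra.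
Qed.

Lemma zeta_bound s N : 1 < s -> sumR (seq 1 N) (npw s) <= s / (s - 1).
Proof.
  intros Hs. destruct N. { simpl. apply Rlt_le. apply Rdiv_lt_0_compat; lra. }
  eapply Rle_trans; [apply zeta_partial; [lra|lia]|].
  assert (0 < Rpower (INR (S N)) (1 - s) / (s - 1))
    by (apply Rdiv_lt_0_compat; [apply Rpower_pos|lra]).
  lra.
Qed.

Lemma npw_1 n : (1 <= n)%nat -> npw 1 n = / INR n.
Proof. intros. unfold npw. rewrite Rpower_Ropp, Rpower_1; auto. apply INR_pos; auto. Qed.

Lemma harmonic_bound N : (1 <= N)%nat -> sumR (seq 1 N) (npw 1) <= 1 + ln (INR N).
Proof.
  intros HN. induction N as [|M IH]; [lia|].
  destruct (Nat.eq_dec M 0) as [E|E].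
  - subst. simpl. rewrite npw_1 by lia. simpl. rewrite ln_1. lra.
  - rewrite seq_S, sumR_app. simpl sumR at 2.
    specialize (IH ltac:(lia)).
    assert (HM0 : 0 < INR M) by (apply INR_pos; lia).
    destruct (MVT_cor2 ln (fun x => / x) (INR M) (INR M + 1)) as [c [Hc1 Hc2]]; [lra| |].
    { intros c Hc. apply derivable_pt_lim_ln. lra. }
    replace (1 + M)%nat with (S M) by lia.
    rewrite npw_1 by lia. rewrite S_INR.
    replace (INR M + 1 - INR M) with 1 in Hc1 by ring.
    assert (/ (INR M + 1) <= / c) by (apply Rinv_le_contravar; lra).
    lra.
Qed.
(** * Arithmetic of the equation sqrt a + sqrt b = sqrt c + sqrt d *)

Lemma square_of_scaled_square K x M :
  (1 <= K)%nat -> (K * K * x = M * M)%nat -> exists v, x = (v * v)%nat.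
Proof.
  intros HK H.
  set (g := Nat.gcd K M).
  assert (Hg : g <> 0%nat) by (pose proof (gcd_pos K M HK); unfold g; lia).
  destruct (Nat.gcd_divide_l K M) as [K' HK']. fold g in HK'.
  destruct (Nat.gcd_divide_r K M) as [M' HM']. fold g in HM'.
  assert (Hcop : Nat.gcd (K / g) (M / g) = 1%nat) by (apply Nat.gcd_div_gcd; auto).
  rewrite HK' in Hcop at 1. rewrite HM' in Hcop. rewrite !Nat.div_mul in Hcop by auto.
  assert (E : (K' * K' * x = M' * M')%nat).
  { rewrite HK', HM' in H. apply (Nat.mul_cancel_r _ _ (g * g)); [nia|].
    replace (K' * K' * x * (g * g))%nat with (K' * g * (K' * g) * x)%nat by ring.
    rewrite H. ring. }
  assert (D : Nat.divide K' (M' * M')) by (exists (K' * x)%nat; rewrite <- E; ring).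
  apply Nat.gauss in D; auto.
  assert (Nat.divide K' 1)
    by (rewrite <- Hcop; apply Nat.gcd_greatest; auto; apply Nat.divide_refl).
  apply Nat.divide_1_r in H0. subst K'. exists M'. lia.
Qed.

Definition squarefree (q : nat) : Prop := forall k, Nat.divide (k * k) q -> k = 1%nat.

Lemma squarefree_decomposition a : (1 <= a)%nat ->
  exists q m, (1 <= q)%nat /\ (1 <= m)%nat /\ a = (q * (m * m))%nat /\ squarefree q.
Proof.
  induction a as [a IH] using lt_wf_ind. intros Ha.
  destruct (classic (squarefree a)) as [S|S].
  - exists a, 1%nat. repeat split; auto; lia.
  - unfold squarefree in S. apply not_all_ex_not in S as [k Hk].
    apply imply_to_and in Hk as [[a' Ha'] Hk1].
    assert (2 <= k)%nat by (destruct k; [lia|]; lia).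
    assert (1 <= a')%nat by (destruct a'; lia).
    assert (a' < a)%nat by (assert (4 <= k * k)%nat by nia; rewrite Ha'; nia).
    destruct (IH a') as (q & m & Hq & Hm & E & Sq); [lia|lia|].
    exists q, (k * m)%nat. repeat split; auto; [nia|]. rewrite Ha', E. ring.
Qed.

Lemma squarefree_times_square q b v : (1 <= q)%nat -> squarefree q ->
  (q * b = v * v)%nat -> exists r, b = (q * (r * r))%nat.
Proof.
  intros Hq S H.
  set (g := Nat.gcd q v).
  assert (Hg : g <> 0%nat) by (pose proof (gcd_pos q v Hq); unfold g; lia).
  destruct (Nat.gcd_divide_l q v) as [q1 Hq1]. fold g in Hq1.
  destruct (Nat.gcd_divide_r q v) as [v1 Hv1]. fold g in Hv1.
  assert (Hcop : Nat.gcd (q / g) (v / g) = 1%nat) by (apply Nat.gcd_div_gcd; auto).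
  rewrite Hq1 in Hcop at 1. rewrite Hv1 in Hcop. rewrite !Nat.div_mul in Hcop by auto.
  assert (E : (q1 * b = g * (v1 * v1))%nat).
  { rewrite Hq1, Hv1 in H. apply (Nat.mul_cancel_r _ _ g); auto.
    replace (q1 * b * g)%nat with (q1 * g * b)%nat by ring. rewrite H. ring. }
  assert (D : Nat.divide q1 (v1 * (v1 * g))) by (exists b; rewrite (Nat.mul_comm b q1), E; ring).
  apply Nat.gauss in D; auto. apply Nat.gauss in D; auto.
  destruct D as [h Hh].
  assert (q1 = 1%nat) by (apply S; exists h; rewrite Hq1, Hh; ring).
  subst q1. exists v1.
  assert (g = q) by lia. rewrite H0 in *.
  apply (Nat.mul_cancel_l _ _ q); [lia|]. rewrite H, Hv1. ring.
Qed.

Lemma same_squarefree_part q m b s : (1 <= q)%nat -> (1 <= m)%nat -> squarefree q ->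
  (q * (m * m) * b = s * s)%nat -> exists r, b = (q * (r * r))%nat.
Proof.
  intros Hq Hm S H.
  destruct (square_of_scaled_square m (q * b) s Hm) as [v Hv]; [rewrite <- H; ring|].
  apply (squarefree_times_square q b v); auto.
Qed.

Lemma sqrt_diff_half_integer x y k : k <> 0%Z ->
  sqrt (INR x) - sqrt (INR y) = IZR k / 2 -> exists v, x = (v * v)%nat.
Proof.
  intros Hk H.
  set (X := sqrt (INR x)) in *. set (Y := sqrt (INR y)) in *.
  assert (HX : X * X = INR x) by (apply sqrt_sqrt, pos_INR).
  assert (HY : Y * Y = INR y) by (apply sqrt_sqrt, pos_INR).
  set (kr := IZR k) in *.
  assert (Hkr : kr <> 0) by (apply not_0_IZR; auto).
  (* 4 k X = k^2 + 4 (x - y), so (4k)^2 x is the square of an integer. *)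
  assert (E : 16 * kr * kr * INR x =
              (kr * kr + 4 * (INR x - INR y)) * (kr * kr + 4 * (INR x - INR y))).
  { assert (4 * kr * X = kr * kr + 4 * (INR x - INR y)).
    { rewrite <- HX, <- HY. replace Y with (X - kr / 2) by lra. field. }
    rewrite <- H0, <- HX. ring. }
  rewrite !INR_IZR_INZ in E. unfold kr in E.
  set (M := (k * k + 4 * (Z.of_nat x - Z.of_nat y))%Z).
  assert (EZ : (4 * k * (4 * k) * Z.of_nat x = M * M)%Z).
  { apply eq_IZR. unfold M. rewrite !mult_IZR, !plus_IZR, !mult_IZR, !minus_IZR.
    rewrite <- E. simpl. ring. }
  apply (f_equal Z.abs_nat) in EZ. rewrite !Zabs2Nat.inj_mul, Zabs2Nat.id in EZ.
  apply (square_of_scaled_square (Z.abs_nat (4 * k)) x (Z.abs_nat M)); [lia|].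
  rewrite !Zabs2Nat.inj_mul. rewrite <- EZ. ring.
Qed.

Lemma sqrt_inj_nat x y : sqrt (INR x) = sqrt (INR y) -> x = y.
Proof. intros H. apply INR_eq. apply sqrt_inj; auto using pos_INR. Qed.

Lemma sqrt_mult_nat x y : sqrt (INR x) * sqrt (INR y) = sqrt (INR (x * y)).
Proof. rewrite mult_INR, sqrt_mult; auto using pos_INR. Qed.

Lemma sqrt_nat_sq n : sqrt (INR n) * sqrt (INR n) = INR n.
Proof. apply sqrt_sqrt, pos_INR. Qed.

Lemma sqrt_nat_pos n : (1 <= n)%nat -> 0 < sqrt (INR n).
Proof. intros. apply sqrt_lt_R0, INR_pos; auto. Qed.

Lemma sqrt_square_part q r : sqrt (INR (q * (r * r))) = INR r * sqrt (INR q).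
Proof.
  rewrite mult_INR, sqrt_mult
    by (auto using pos_INR; rewrite mult_INR; apply Rmult_le_pos; apply pos_INR).
  rewrite mult_INR, sqrt_square by apply pos_INR. ring.
Qed.

Lemma square_part_pos q r : (1 <= q * (r * r))%nat -> (1 <= r)%nat.
Proof. destruct r; lia. Qed.

Lemma sum_prod_eq (a b c d : nat) : (a + b = c + d)%nat -> (a * b = c * d)%nat ->
  (a = c /\ b = d) \/ (a = d /\ b = c).
Proof.
  intros H1 H2.
  assert (E : ((Z.of_nat a - Z.of_nat c) * (Z.of_nat a - Z.of_nat d) = 0)%Z).
  { assert (Z.of_nat b = Z.of_nat c + Z.of_nat d - Z.of_nat a)%Z by lia.
    assert (Z.of_nat a * Z.of_nat b = Z.of_nat c * Z.of_nat d)%Z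
      by (rewrite <- !Nat2Z.inj_mul; f_equal; auto).
    nia. }
  apply Z.mul_eq_0 in E. destruct E; [left|right]; lia.
Qed.

Lemma cross_degenerate a b c d :
  sqrt (INR a) + sqrt (INR b) = sqrt (INR c) + sqrt (INR d) ->
  (a + c = b + d)%nat -> (a * c = b * d)%nat -> (a = c /\ b = d) \/ (a = d /\ b = c).
Proof.
  intros H E2 E1.
  destruct (sum_prod_eq a c b d E2 E1) as [[E3 E4]|[E3 E4]]; [|right; split; lia].
  left. rewrite <- E3, <- E4 in H.
  assert (a = c) by (apply sqrt_inj_nat; lra). lia.
Qed.

(* Squaring A + B = C + D, resp. A - C = D - B, with A^2 = a etc. turns the
   products sqrt(ab) - sqrt(cd), resp. sqrt(ac) - sqrt(bd), into half-integers. *)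
Lemma sqrt_sum_eq_cross a b c d :
  sqrt (INR a) + sqrt (INR b) = sqrt (INR c) + sqrt (INR d) ->
  sqrt (INR (a * b)) - sqrt (INR (c * d)) =
    IZR (Z.of_nat c + Z.of_nat d - Z.of_nat a - Z.of_nat b) / 2 /\
  sqrt (INR (a * c)) - sqrt (INR (b * d)) =
    IZR (Z.of_nat a + Z.of_nat c - Z.of_nat b - Z.of_nat d) / 2.
Proof.
  intros H. rewrite <- !sqrt_mult_nat, !minus_IZR, !plus_IZR, <- !INR_IZR_INZ.
  pose proof (sqrt_nat_sq a). pose proof (sqrt_nat_sq b).
  pose proof (sqrt_nat_sq c). pose proof (sqrt_nat_sq d).
  set (A := sqrt (INR a)) in *. set (B := sqrt (INR b)) in *.
  set (C := sqrt (INR c)) in *. set (D := sqrt (INR d)) in *.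
  split.
  - assert ((A + B) * (A + B) = (C + D) * (C + D)) by (rewrite H; auto). nra.
  - assert ((A - C) * (A - C) = (D - B) * (D - B)) by (replace (A - C) with (D - B) by lra; auto).
    nra.
Qed.

Lemma common_squarefree_part a b c d : (1 <= a)%nat -> (1 <= b)%nat ->
  (exists s, (a * b = s * s)%nat) -> (exists u, (a * c = u * u)%nat) ->
  (exists t, (b * d = t * t)%nat) ->
  exists q r1 r2 r3 r4, (1 <= q)%nat /\
    a = (q * (r1 * r1))%nat /\ b = (q * (r2 * r2))%nat /\
    c = (q * (r3 * r3))%nat /\ d = (q * (r4 * r4))%nat.
Proof.
  intros Ha Hb [s Hs] [u Hu] [t Ht].
  destruct (squarefree_decomposition a Ha) as (q & m & Hq & Hm & Ea & Sq).
  destruct (same_squarefree_part q m b s Hq Hm Sq) as [r2 Hr2]; [rewrite <- Ea; auto|].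
  destruct (same_squarefree_part q m c u Hq Hm Sq) as [r3 Hr3]; [rewrite <- Ea; auto|].
  assert (Hr2p : (1 <= r2)%nat) by (destruct r2; lia).
  destruct (same_squarefree_part q r2 d t Hq Hr2p Sq) as [r4 Hr4]; [rewrite <- Hr2; auto|].
  exists q, m, r2, r3, r4. auto.
Qed.

Lemma sqrt_sum_eq_structure a b c d :
  (1 <= a)%nat -> (1 <= b)%nat -> (1 <= c)%nat -> (1 <= d)%nat ->
  sqrt (INR a) + sqrt (INR b) = sqrt (INR c) + sqrt (INR d) ->
  (a = c /\ b = d) \/ (a = d /\ b = c) \/
  exists q r1 r2 r3 r4, (1 <= q)%nat /\ (1 <= r1)%nat /\ (1 <= r2)%nat /\
    (1 <= r3)%nat /\ (1 <= r4)%nat /\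
    a = (q * (r1 * r1))%nat /\ b = (q * (r2 * r2))%nat /\ c = (q * (r3 * r3))%nat /\
    d = (q * (r4 * r4))%nat /\ (r1 + r2 = r3 + r4)%nat.
Proof.
  intros Ha Hb Hc Hd H.
  destruct (sqrt_sum_eq_cross a b c d H) as [K1 K2].
  set (k := (Z.of_nat c + Z.of_nat d - Z.of_nat a - Z.of_nat b)%Z) in K1.
  set (k' := (Z.of_nat a + Z.of_nat c - Z.of_nat b - Z.of_nat d)%Z) in K2.
  (* k = 0: equal sums and equal products, hence {c, d} = {a, b}. *)
  destruct (Z.eq_dec k 0) as [k0|kn0].
  { rewrite k0 in K1. replace (IZR 0 / 2) with 0 in K1 by (simpl; field).
    assert (E1 : (a * b = c * d)%nat) by (apply sqrt_inj_nat; lra).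
    assert (E2 : (a + b = c + d)%nat) by (unfold k in k0; lia).
    destruct (sum_prod_eq a b c d E2 E1); auto. }
  destruct (Z.eq_dec k' 0) as [k0|kn0'].
  { rewrite k0 in K2. replace (IZR 0 / 2) with 0 in K2 by (simpl; field).
    assert (E1 : (a * c = b * d)%nat) by (apply sqrt_inj_nat; lra).
    assert (E2 : (a + c = b + d)%nat) by (unfold k' in k0; lia).
    destruct (cross_degenerate a b c d H E2 E1); auto. }
  (* Otherwise ab, ac and bd are perfect squares. *)
  right; right.
  destruct (common_squarefree_part a b c d Ha Hb) as (q & r1 & r2 & r3 & r4 & Hq & Ea & Eb & Ec & Ed).
  - apply (sqrt_diff_half_integer _ _ _ kn0 K1).
  - apply (sqrt_diff_half_integer _ _ _ kn0' K2).
  - apply (sqrt_diff_half_integer (b * d) (a * c) (- k')); [lia|]. rewrite opp_IZR. lra.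
  - subst a b c d.
    exists q, r1, r2, r3, r4. split; [exact Hq|].
    do 4 (split; [eapply square_part_pos; eassumption|]).
    do 4 (split; [reflexivity|]).
    (* dividing the equation by sqrt q leaves r1 + r2 = r3 + r4 *)
    rewrite !sqrt_square_part in H. pose proof (sqrt_nat_pos q Hq).
    apply INR_eq. rewrite !plus_INR.
    apply (Rmult_eq_reg_r (sqrt (INR q))); [lra|lra].
Qed.
(** * Pointwise bounds on the terms of c_2 *)

Lemma Rpower_three_halves x : 0 < x -> Rpower x (3/2) = x * sqrt x.
Proof.
  intros. replace (3/2) with (1 + /2) by field. rewrite Rpower_plus, Rpower_1, Rpower_sqrt; auto.
Qed.

Lemma Rpower_five_halves x : 0 < x -> Rpower x (5/2) = x * x * sqrt x.
Proof.
  intros. replace (5/2) with (1 + (1 + /2)) by field.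
  rewrite !Rpower_plus, Rpower_1, Rpower_sqrt; auto. ring.
Qed.

(* The denominator (n1 n2 n3 n4)^(3/4) when n1 n2 n3 n4 = Y^2. *)
Lemma Rpower_sq_three_quarters Y : 0 < Y -> Rpower (Y * Y) (3/4) = Y * sqrt Y.
Proof.
  intros. rewrite <- Rpower_mult_distr by auto. rewrite <- Rpower_plus.
  replace (3/4 + 3/4) with (3/2) by field. apply Rpower_three_halves; auto.
Qed.

Lemma npw_1_sqrt n : (1 <= n)%nat -> npw 1 n = / (sqrt (INR n) * sqrt (INR n)).
Proof. intros. rewrite npw_1, sqrt_nat_sq; auto. Qed.

Lemma npw_32_sqrt n : (1 <= n)%nat ->
  npw (3/2) n = / (sqrt (INR n) * sqrt (INR n) * sqrt (INR n)).
Proof.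
  intros. unfold npw. rewrite Rpower_Ropp, Rpower_three_halves by (apply INR_pos; auto).
  rewrite sqrt_nat_sq; auto.
Qed.

Lemma npw_52_sqrt n : (1 <= n)%nat -> npw (5/2) n =
  / (sqrt (INR n) * sqrt (INR n) * sqrt (INR n) * sqrt (INR n) * sqrt (INR n)).
Proof.
  intros. unfold npw. rewrite Rpower_Ropp, Rpower_five_halves by (apply INR_pos; auto).
  f_equal. pose proof (sqrt_nat_sq n) as E. set (s := sqrt (INR n)) in *. rewrite <- E. ring.
Qed.

(* The diagonal term: c_2's summand at (a, b, a, b),
   d(a)^2 d(b)^2 * 2 (sqrt a + sqrt b) / (a b)^(3/2). *)
Definition diag_weight (a b : nat) : R :=
  2 * (dR a * dR a) * (dR b * dR b) * (npw 1 a * npw (3/2) b + npw (3/2) a * npw 1 b).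

(* d(r)^2 r^(-3/2), the weight of the free coordinate r3 or r4. *)
Definition side_weight (r : nat) : R := dR r * dR r * npw (3/2) r.

(* d(q)^4 q^(-5/2), the weight of the common squarefree part q. *)
Definition core_weight (q : nat) : R := (dR q * dR q) * (dR q * dR q) * npw (5/2) q.

Lemma diag_weight_nonneg a b : 0 <= diag_weight a b.
Proof.
  unfold diag_weight. pose proof (dR_nonneg a). pose proof (dR_nonneg b).
  pose proof (npw_pos 1 a). pose proof (npw_pos (3/2) a).
  pose proof (npw_pos 1 b). pose proof (npw_pos (3/2) b).
  apply Rmult_le_pos; [|nra]. apply Rmult_le_pos; [|nra]. nra.
Qed.

Lemma side_weight_nonneg r : 0 <= side_weight r.
Proof. unfold side_weight. pose proof (dR_nonneg r). pose proof (npw_pos (3/2) r). nra. Qed.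

Lemma core_weight_nonneg q : 0 <= core_weight q.
Proof.
  unfold core_weight. pose proof (dR_nonneg q). pose proof (npw_pos (5/2) q).
  apply Rmult_le_pos; [|lra]. apply Rmult_le_pos; nra.
Qed.

Lemma diag_term_value a b X : (1 <= a)%nat -> (1 <= b)%nat ->
  (X = a * b * a * b \/ X = a * b * b * a)%nat ->
  INR (ndiv a * ndiv b * ndiv a * ndiv b) *
    (sqrt (INR a) + sqrt (INR b) + sqrt (INR a) + sqrt (INR b)) / Rpower (INR X) (3/4)
  = diag_weight a b.
Proof.
  intros Ha Hb HX.
  assert (HX' : INR X = INR (a * b) * INR (a * b))
    by (destruct HX; subst; rewrite !mult_INR; ring).
  rewrite HX', Rpower_sq_three_quarters by (apply INR_pos; nia).
  rewrite <- sqrt_mult_nat, !mult_INR. fold (dR a) (dR b).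
  unfold diag_weight. rewrite !npw_1_sqrt, !npw_32_sqrt by auto.
  pose proof (sqrt_nat_pos a Ha). pose proof (sqrt_nat_pos b Hb).
  pose proof (sqrt_nat_sq a) as Ea. pose proof (sqrt_nat_sq b) as Eb.
  set (sa := sqrt (INR a)) in *. set (sb := sqrt (INR b)) in *.
  rewrite <- Ea, <- Eb. field. split; lra.
Qed.

Lemma diag_term_bound a b : (1 <= a)%nat -> (1 <= b)%nat -> c2_term a b a b <= diag_weight a b.
Proof.
  intros. unfold c2_term. destruct Req_EM_T; [|apply diag_weight_nonneg].
  rewrite diag_term_value; auto. lra.
Qed.

Lemma diag_term_swap_bound a b : (1 <= a)%nat -> (1 <= b)%nat -> c2_term a b b a <= diag_weight a b.
Proof.
  intros. unfold c2_term. destruct Req_EM_T; [|apply diag_weight_nonneg].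
  replace (sqrt (INR a) + sqrt (INR b) + sqrt (INR b) + sqrt (INR a)) with
    (sqrt (INR a) + sqrt (INR b) + sqrt (INR a) + sqrt (INR b)) by ring.
  replace (ndiv a * ndiv b * ndiv b * ndiv a)%nat with (ndiv a * ndiv b * ndiv a * ndiv b)%nat
    by ring.
  rewrite diag_term_value; auto. lra.
Qed.

(* With s_i = sqrt r_i, E_i = d(r_i), E4 <= 2 s4 and r1 + r2 <= 2 r4, the
   factor d(r4)^2 r4^(-3/2) is absorbed:
     E3^2 E4^2 2 (r1 + r2) / (r3 r4)^(3/2) <= 16 (sqrt r1 + sqrt r2) E3^2 / r3^(3/2). *)
Lemma absorb_larger s1 s2 s3 s4 E3 E4 :
  0 < s1 -> 0 < s2 -> 0 < s3 -> 0 < s4 -> 0 <= E4 ->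
  E4 * E4 <= 4 * (s4 * s4) -> s1 * s1 + s2 * s2 <= 2 * (s4 * s4) ->
  (E3 * E3) * (E4 * E4) * (2 * (s1 * s1 + s2 * s2)) / ((s3 * s3 * s3) * (s4 * s4 * s4))
  <= 16 * (s1 + s2) * ((E3 * E3) * / (s3 * s3 * s3)).
Proof.
  intros H1 H2 H3 H4 HE HE4 HS.
  assert (Cof : 2 * (E4 * E4) * (s1 * s1 + s2 * s2) <= 16 * (s1 + s2) * (s4 * s4 * s4)).
  { pose proof (Rle_0_sqr (s1 - s2)). unfold Rsqr in H.
    assert (s1 + s2 <= 2 * s4) by nra.
    assert (s1 * s1 + s2 * s2 <= (s1 + s2) * (2 * s4)) by nra.
    assert (2 * (E4 * E4) * (s1 * s1 + s2 * s2) <= 8 * (s4 * s4) * (s1 * s1 + s2 * s2)) by nra.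
    nra. }
  assert (P3 : 0 < s3 * s3 * s3) by (repeat apply Rmult_lt_0_compat; auto).
  assert (P4 : 0 < s4 * s4 * s4) by (repeat apply Rmult_lt_0_compat; auto).
  assert (Q3 : 0 <= (E3 * E3) * / (s3 * s3 * s3))
    by (apply Rmult_le_pos; [nra|left; apply Rinv_0_lt_compat; auto]).
  replace ((E3 * E3) * (E4 * E4) * (2 * (s1 * s1 + s2 * s2)) / ((s3 * s3 * s3) * (s4 * s4 * s4)))
    with (((E3 * E3) * / (s3 * s3 * s3)) * ((2 * (E4 * E4) * (s1 * s1 + s2 * s2)) / (s4 * s4 * s4)))
    by (field; lra).
  replace (16 * (s1 + s2) * ((E3 * E3) * / (s3 * s3 * s3))) with
    (((E3 * E3) * / (s3 * s3 * s3)) * ((16 * (s1 + s2) * (s4 * s4 * s4)) / (s4 * s4 * s4)))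
    by (field; lra).
  apply Rmult_le_compat_l; auto. unfold Rdiv.
  apply Rmult_le_compat_r; [left; apply Rinv_0_lt_compat; auto | lra].
Qed.

(* Real form of the off-diagonal estimate: with s_i = sqrt r_i, E_i = d(r_i)
   and r1 + r2 = r3 + r4, absorbing the factor of the larger of r3, r4 gives
     E1^2..E4^2 * 2 (r1 + r2) / (r1 r2 r3 r4)^(3/2)
       <= 8 * G(r1, r2) * (V(r3) + V(r4)). *)
Lemma offdiag_real_key s1 s2 s3 s4 E1 E2 E3 E4 :
  0 < s1 -> 0 < s2 -> 0 < s3 -> 0 < s4 -> 0 <= E1 -> 0 <= E2 -> 0 <= E3 -> 0 <= E4 ->
  E3 * E3 <= 4 * (s3 * s3) -> E4 * E4 <= 4 * (s4 * s4) ->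
  s1 * s1 + s2 * s2 = s3 * s3 + s4 * s4 ->
  (E1 * E1) * (E2 * E2) * (E3 * E3) * (E4 * E4) * (2 * (s1 * s1 + s2 * s2)) /
     ((s1 * s1 * s1) * (s2 * s2 * s2) * (s3 * s3 * s3) * (s4 * s4 * s4))
  <= 8 * (2 * (E1 * E1) * (E2 * E2) *
          (/ (s1 * s1) * / (s2 * s2 * s2) + / (s1 * s1 * s1) * / (s2 * s2)))
       * ((E3 * E3) * / (s3 * s3 * s3) + (E4 * E4) * / (s4 * s4 * s4)).
Proof.
  intros H1 H2 H3 H4 G1 G2 G3 G4 HE3 HE4 HS.
  set (F := (E1 * E1) * (E2 * E2) / ((s1 * s1 * s1) * (s2 * s2 * s2))).
  assert (HF : 0 <= F).
  { unfold F. apply Rmult_le_pos; [nra|]. left. apply Rinv_0_lt_compat.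
    repeat apply Rmult_lt_0_compat; auto. }
  replace ((E1 * E1) * (E2 * E2) * (E3 * E3) * (E4 * E4) * (2 * (s1 * s1 + s2 * s2)) /
     ((s1 * s1 * s1) * (s2 * s2 * s2) * (s3 * s3 * s3) * (s4 * s4 * s4)))
    with (F * ((E3 * E3) * (E4 * E4) * (2 * (s1 * s1 + s2 * s2)) / ((s3 * s3 * s3) * (s4 * s4 * s4))))
    by (unfold F; field; repeat split; lra).
  replace (8 * (2 * (E1 * E1) * (E2 * E2) *
                (/ (s1 * s1) * / (s2 * s2 * s2) + / (s1 * s1 * s1) * / (s2 * s2)))
       * ((E3 * E3) * / (s3 * s3 * s3) + (E4 * E4) * / (s4 * s4 * s4)))
    with (F * (16 * (s1 + s2) * ((E3 * E3) * / (s3 * s3 * s3) + (E4 * E4) * / (s4 * s4 * s4))))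
    by (unfold F; field; repeat split; lra).
  apply Rmult_le_compat_l; auto.
  assert (Q3 : 0 <= (E3 * E3) * / (s3 * s3 * s3))
    by (apply Rmult_le_pos; [nra|left; apply Rinv_0_lt_compat; repeat apply Rmult_lt_0_compat; auto]).
  assert (Q4 : 0 <= (E4 * E4) * / (s4 * s4 * s4))
    by (apply Rmult_le_pos; [nra|left; apply Rinv_0_lt_compat; repeat apply Rmult_lt_0_compat; auto]).
  destruct (Rle_or_lt s3 s4) as [L|L].
  - pose proof (absorb_larger s1 s2 s3 s4 E3 E4 H1 H2 H3 H4 G4 HE4 ltac:(nra)). nra.
  - pose proof (absorb_larger s1 s2 s4 s3 E4 E3 H1 H2 H4 H3 G3 HE3 ltac:(nra)) as A.
    replace ((E4 * E4) * (E3 * E3) * (2 * (s1 * s1 + s2 * s2)) / ((s4 * s4 * s4) * (s3 * s3 * s3)))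
      with ((E3 * E3) * (E4 * E4) * (2 * (s1 * s1 + s2 * s2)) / ((s3 * s3 * s3) * (s4 * s4 * s4)))
      in A by (field; repeat split; lra).
    nra.
Qed.
Section OffDiagonal.
Variables q r1 r2 r3 r4 : nat.
Hypothesis q_pos : (1 <= q)%nat.
Hypothesis r1_pos : (1 <= r1)%nat.
Hypothesis r2_pos : (1 <= r2)%nat.
Hypothesis r3_pos : (1 <= r3)%nat.
Hypothesis r4_pos : (1 <= r4)%nat.
Hypothesis r_sum : (r1 + r2 = r3 + r4)%nat.

Let t := sqrt (INR q).
Let s1 := sqrt (INR r1).
Let s2 := sqrt (INR r2).
Let s3 := sqrt (INR r3).
Let s4 := sqrt (INR r4).

Lemma offdiag_term_value :
  c2_term (q * (r1 * r1)) (q * (r2 * r2)) (q * (r3 * r3)) (q * (r4 * r4)) =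
  dR (q * (r1 * r1)) * dR (q * (r2 * r2)) * dR (q * (r3 * r3)) * dR (q * (r4 * r4)) *
    (2 * (s1 * s1 + s2 * s2)) /
    (t * t * t * t * t * ((s1 * s1 * s1) * (s2 * s2 * s2) * (s3 * s3 * s3) * (s4 * s4 * s4))).
Proof.
  assert (Hsum : INR r1 + INR r2 = INR r3 + INR r4) by (rewrite <- !plus_INR; f_equal; auto).
  unfold c2_term. rewrite !sqrt_square_part.
  destruct Req_EM_T as [_|Hne].
  2: { exfalso. apply Hne.
       transitivity ((INR r1 + INR r2) * sqrt (INR q)); [ring|]. rewrite Hsum. ring. }
  set (Y := (q * q * (r1 * r2 * r3 * r4))%nat).
  replace (q * (r1 * r1) * (q * (r2 * r2)) * (q * (r3 * r3)) * (q * (r4 * r4)))%nat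
    with (Y * Y)%nat by (unfold Y; ring).
  rewrite (mult_INR Y Y), Rpower_sq_three_quarters by (apply INR_pos; unfold Y; nia).
  unfold Y. rewrite <- !sqrt_mult_nat, !mult_INR.
  fold (dR (q * (r1 * r1))) (dR (q * (r2 * r2))) (dR (q * (r3 * r3))) (dR (q * (r4 * r4))).
  fold t s1 s2 s3 s4.
  assert (E : s1 * s1 = INR r1 /\ s2 * s2 = INR r2 /\ s3 * s3 = INR r3 /\
              s4 * s4 = INR r4 /\ t * t = INR q) by (repeat split; apply sqrt_nat_sq).
  destruct E as (E1 & E2 & E3 & E4 & Et).
  rewrite <- E1, <- E2, <- E3, <- E4, <- Et in *.
  assert (0 < t /\ 0 < s1 /\ 0 < s2 /\ 0 < s3 /\ 0 < s4) by (repeat split; apply sqrt_nat_pos; auto).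
  replace (s1 * s1 * t + s2 * s2 * t + s3 * s3 * t + s4 * s4 * t)
    with ((s1 * s1 + s2 * s2) * t + (s3 * s3 + s4 * s4) * t) by ring.
  rewrite <- Hsum. field. repeat split; lra.
Qed.

Lemma offdiag_divisor_product :
  dR (q * (r1 * r1)) * dR (q * (r2 * r2)) * dR (q * (r3 * r3)) * dR (q * (r4 * r4))
  <= (dR q * dR q) * (dR q * dR q) *
     ((dR r1 * dR r1) * (dR r2 * dR r2) * (dR r3 * dR r3) * (dR r4 * dR r4)).
Proof.
  pose proof (dR_square_factor q r1 q_pos r1_pos). pose proof (dR_square_factor q r2 q_pos r2_pos).
  pose proof (dR_square_factor q r3 q_pos r3_pos). pose proof (dR_square_factor q r4 q_pos r4_pos).
  pose proof (dR_nonneg q). pose proof (dR_nonneg r1). pose proof (dR_nonneg r2).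
  pose proof (dR_nonneg r3). pose proof (dR_nonneg r4).
  pose proof (dR_nonneg (q * (r1 * r1))). pose proof (dR_nonneg (q * (r2 * r2))).
  pose proof (dR_nonneg (q * (r3 * r3))). pose proof (dR_nonneg (q * (r4 * r4))).
  apply Rle_trans with ((dR q * (dR r1 * dR r1)) * (dR q * (dR r2 * dR r2)) *
                        (dR q * (dR r3 * dR r3)) * (dR q * (dR r4 * dR r4))); [|apply Req_le; ring].
  repeat apply Rmult_le_compat; auto; repeat apply Rmult_le_pos; auto.
Qed.

Lemma offdiag_term_bound :
  c2_term (q * (r1 * r1)) (q * (r2 * r2)) (q * (r3 * r3)) (q * (r4 * r4)) <=
  core_weight q * (8 * diag_weight r1 r2 * (side_weight r3 + side_weight r4)).
Proof.
  rewrite offdiag_term_value.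
  unfold core_weight, diag_weight, side_weight.
  rewrite npw_52_sqrt, !npw_1_sqrt, !npw_32_sqrt by auto. fold t s1 s2 s3 s4.
  pose proof (sqrt_nat_pos q q_pos) as Pt. pose proof (sqrt_nat_pos r1 r1_pos) as P1.
  pose proof (sqrt_nat_pos r2 r2_pos) as P2. pose proof (sqrt_nat_pos r3 r3_pos) as P3.
  pose proof (sqrt_nat_pos r4 r4_pos) as P4. fold t s1 s2 s3 s4 in Pt, P1, P2, P3, P4.
  assert (Hsum : s1 * s1 + s2 * s2 = s3 * s3 + s4 * s4).
  { unfold s1, s2, s3, s4. rewrite !sqrt_nat_sq, <- !plus_INR. f_equal; auto. }
  pose proof (dR_sq_bound r3 r3_pos) as D3. pose proof (dR_sq_bound r4 r4_pos) as D4.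
  rewrite <- (sqrt_nat_sq r3) in D3. rewrite <- (sqrt_nat_sq r4) in D4. fold s3 in D3. fold s4 in D4.
  pose proof (offdiag_real_key s1 s2 s3 s4 (dR r1) (dR r2) (dR r3) (dR r4) P1 P2 P3 P4
    (dR_nonneg _) (dR_nonneg _) (dR_nonneg _) (dR_nonneg _) D3 D4 Hsum) as Key.
  pose proof offdiag_divisor_product as Hprod.
  set (X := 2 * (s1 * s1 + s2 * s2)) in *.
  set (P := s1 * s1 * s1 * (s2 * s2 * s2) * (s3 * s3 * s3) * (s4 * s4 * s4)) in *.
  set (T := t * t * t * t * t).
  assert (PP : 0 < P) by (unfold P; repeat apply Rmult_lt_0_compat; auto).
  assert (PT : 0 < T) by (unfold T; repeat apply Rmult_lt_0_compat; auto).
  assert (PX : 0 <= X / (T * P)).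
  { unfold Rdiv. apply Rmult_le_pos; [unfold X; nra|].
    left; apply Rinv_0_lt_compat, Rmult_lt_0_compat; auto. }
  apply Rle_trans with ((dR q * dR q) * (dR q * dR q) * / T *
     ((dR r1 * dR r1) * (dR r2 * dR r2) * (dR r3 * dR r3) * (dR r4 * dR r4) * X / P)).
  - replace ((dR q * dR q) * (dR q * dR q) * / T *
       ((dR r1 * dR r1) * (dR r2 * dR r2) * (dR r3 * dR r3) * (dR r4 * dR r4) * X / P))
      with (X / (T * P) * ((dR q * dR q) * (dR q * dR q) *
         ((dR r1 * dR r1) * (dR r2 * dR r2) * (dR r3 * dR r3) * (dR r4 * dR r4)))) by (field; lra).
    replace (dR (q * (r1 * r1)) * dR (q * (r2 * r2)) * dR (q * (r3 * r3)) * dR (q * (r4 * r4)) * X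
             / (T * P))
      with (X / (T * P) * (dR (q * (r1 * r1)) * dR (q * (r2 * r2)) * dR (q * (r3 * r3))
             * dR (q * (r4 * r4)))) by (field; lra).
    apply Rmult_le_compat_l; auto.
  - assert (0 <= (dR q * dR q) * (dR q * dR q) * / T).
    { pose proof (dR_nonneg q). apply Rmult_le_pos; [nra|]. left; apply Rinv_0_lt_compat; auto. }
    eapply Rle_trans; [apply Rmult_le_compat_l; [auto|exact Key]|].
    apply Req_le. unfold T. field. repeat split; lra.
Qed.
End OffDiagonal.

Definition guard (p : bool) (y : R) : R := if p then y else 0.

Lemma guard_nonneg p y : 0 <= y -> 0 <= guard p y.
Proof. destruct p; simpl; lra. Qed.

Lemma sum_guard_single N m Y : 0 <= Y -> sumR (seq 1 N) (fun x => guard (Nat.eqb x m) Y) <= Y.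
Proof.
  intros. apply sumR_unique; [apply seq_NoDup|auto|]. intros a b _ _ Ha Hb.
  apply Nat.eqb_eq in Ha, Hb. lia.
Qed.

Lemma sum_guard_and_single N p m Y : 0 <= Y ->
  sumR (seq 1 N) (fun x => guard (p && Nat.eqb x m) Y) <= guard p Y.
Proof. intros. destruct p; simpl; [apply sum_guard_single; auto | rewrite sumR_zero; lra]. Qed.

Definition sum4 (N : nat) (f : nat -> nat -> nat -> nat -> R) : R :=
  sumR (seq 1 N) (fun a => sumR (seq 1 N) (fun b => sumR (seq 1 N) (fun c =>
  sumR (seq 1 N) (fun d => f a b c d)))).

Definition sum5 (N : nat) (f : nat -> nat -> nat -> nat -> nat -> R) : R :=
  sumR (seq 1 N) (fun q => sumR (seq 1 N) (fun r1 => sumR (seq 1 N) (fun r2 =>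
  sumR (seq 1 N) (fun r3 => sumR (seq 1 N) (fun r4 => f q r1 r2 r3 r4))))).

Lemma sum4_nonneg N f : (forall a b c d, 0 <= f a b c d) -> 0 <= sum4 N f.
Proof. intros. unfold sum4. repeat (apply sumR_nonneg; intros). auto. Qed.

Lemma sum5_nonneg N f : (forall q r1 r2 r3 r4, 0 <= f q r1 r2 r3 r4) -> 0 <= sum5 N f.
Proof. intros. unfold sum5. repeat (apply sumR_nonneg; intros). auto. Qed.

Lemma sum5_point N f q r1 r2 r3 r4 : (forall q r1 r2 r3 r4, 0 <= f q r1 r2 r3 r4) ->
  (1 <= q <= N)%nat -> (1 <= r1 <= N)%nat -> (1 <= r2 <= N)%nat ->
  (1 <= r3 <= N)%nat -> (1 <= r4 <= N)%nat -> f q r1 r2 r3 r4 <= sum5 N f.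
Proof.
  intros Hf Hq H1 H2 H3 H4. unfold sum5.
  eapply Rle_trans; [|apply (sumR_point _ _ q);
    [apply in_seq1; auto | intros; repeat (apply sumR_nonneg; intros); auto]].
  eapply Rle_trans; [|apply (sumR_point _ _ r1);
    [apply in_seq1; auto | intros; repeat (apply sumR_nonneg; intros); auto]].
  eapply Rle_trans; [|apply (sumR_point _ _ r2);
    [apply in_seq1; auto | intros; repeat (apply sumR_nonneg; intros); auto]].
  eapply Rle_trans; [|apply (sumR_point _ _ r3);
    [apply in_seq1; auto | intros; repeat (apply sumR_nonneg; intros); auto]].
  apply (sumR_point _ _ r4); [apply in_seq1; auto | auto].
Qed.

Lemma sum4_le N f g : (forall a b c d, (1 <= a <= N)%nat -> (1 <= b <= N)%nat ->
  (1 <= c <= N)%nat -> (1 <= d <= N)%nat -> f a b c d <= g a b c d) -> sum4 N f <= sum4 N g.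
Proof.
  intros H. unfold sum4. apply sumR_le; intros a Ha; apply in_seq1 in Ha.
  apply sumR_le; intros b Hb; apply in_seq1 in Hb.
  apply sumR_le; intros c Hc; apply in_seq1 in Hc.
  apply sumR_le; intros d Hd; apply in_seq1 in Hd. auto.
Qed.

Lemma sum4_plus N f g : sum4 N (fun a b c d => f a b c d + g a b c d) = sum4 N f + sum4 N g.
Proof.
  unfold sum4. rewrite <- sumR_plus. apply sumR_ext; intros.
  rewrite <- sumR_plus. apply sumR_ext; intros.
  rewrite <- sumR_plus. apply sumR_ext; intros.
  rewrite <- sumR_plus. auto.
Qed.

Lemma sum4_sum5_swap N (H : nat -> nat -> nat -> nat -> nat -> nat -> nat -> nat -> nat -> R) :
  sum4 N (fun a b c d => sum5 N (H a b c d)) =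
  sum5 N (fun q r1 r2 r3 r4 => sum4 N (fun a b c d => H a b c d q r1 r2 r3 r4)).
Proof.
  assert (swap5 : forall (G : nat -> nat -> nat -> nat -> nat -> nat -> R),
    sumR (seq 1 N) (fun x => sum5 N (G x)) =
    sum5 N (fun q r1 r2 r3 r4 => sumR (seq 1 N) (fun x => G x q r1 r2 r3 r4))).
  { intros G. unfold sum5. rewrite sumR_swap. apply sumR_ext; intros.
    rewrite sumR_swap. apply sumR_ext; intros.
    rewrite sumR_swap. apply sumR_ext; intros.
    rewrite sumR_swap. apply sumR_ext; intros.
    rewrite sumR_swap. auto. }
  unfold sum4.
  rewrite (sumR_ext _ _ (fun a => sumR (seq 1 N) (fun b => sumR (seq 1 N) (fun c =>
     sum5 N (fun q r1 r2 r3 r4 => sumR (seq 1 N) (fun d => H a b c d q r1 r2 r3 r4))))))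
    by (intros; apply sumR_ext; intros; apply sumR_ext; intros; apply swap5).
  rewrite (sumR_ext _ _ (fun a => sumR (seq 1 N) (fun b => sum5 N (fun q r1 r2 r3 r4 =>
     sumR (seq 1 N) (fun c => sumR (seq 1 N) (fun d => H a b c d q r1 r2 r3 r4))))))
    by (intros; apply sumR_ext; intros; apply swap5).
  rewrite (sumR_ext _ _ (fun a => sum5 N (fun q r1 r2 r3 r4 => sumR (seq 1 N) (fun b =>
     sumR (seq 1 N) (fun c => sumR (seq 1 N) (fun d => H a b c d q r1 r2 r3 r4))))))
    by (intros; apply swap5).
  apply swap5.
Qed.

Definition offdiag_weight (q r1 r2 r3 r4 : nat) : R :=
  guard (Nat.eqb (r1 + r2) (r3 + r4))
    (core_weight q * (8 * diag_weight r1 r2 * (side_weight r3 + side_weight r4))).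

Lemma offdiag_weight_nonneg q r1 r2 r3 r4 : 0 <= offdiag_weight q r1 r2 r3 r4.
Proof.
  unfold offdiag_weight. apply guard_nonneg. apply Rmult_le_pos; [apply core_weight_nonneg|].
  pose proof (diag_weight_nonneg r1 r2).
  pose proof (side_weight_nonneg r3). pose proof (side_weight_nonneg r4). nra.
Qed.

Definition param_match (a b c d q r1 r2 r3 r4 : nat) : bool :=
  Nat.eqb a (q * (r1 * r1)) && Nat.eqb b (q * (r2 * r2)) &&
  Nat.eqb c (q * (r3 * r3)) && Nat.eqb d (q * (r4 * r4)).

Definition offdiag_majorant (N a b c d : nat) : R :=
  sum5 N (fun q r1 r2 r3 r4 => guard (param_match a b c d q r1 r2 r3 r4) (offdiag_weight q r1 r2 r3 r4)).

Lemma le_square_part q r : (1 <= q)%nat -> (r <= q * (r * r))%nat.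
Proof. intros. destruct r; nia. Qed.

Lemma term_decomposition N a b c d :
  (1 <= a <= N)%nat -> (1 <= b <= N)%nat -> (1 <= c <= N)%nat -> (1 <= d <= N)%nat ->
  c2_term a b c d <=
    guard (Nat.eqb c a && Nat.eqb d b) (diag_weight a b) +
    guard (Nat.eqb c b && Nat.eqb d a) (diag_weight a b) + offdiag_majorant N a b c d.
Proof.
  intros Ha Hb Hc Hd.
  assert (P1 : 0 <= guard (Nat.eqb c a && Nat.eqb d b) (diag_weight a b))
    by (apply guard_nonneg, diag_weight_nonneg).
  assert (P2 : 0 <= guard (Nat.eqb c b && Nat.eqb d a) (diag_weight a b))
    by (apply guard_nonneg, diag_weight_nonneg).
  assert (Hguard_nonneg : forall q r1 r2 r3 r4,
    0 <= guard (param_match a b c d q r1 r2 r3 r4) (offdiag_weight q r1 r2 r3 r4))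
    by (intros; apply guard_nonneg, offdiag_weight_nonneg).
  assert (P3 : 0 <= offdiag_majorant N a b c d) by (apply sum5_nonneg; auto).
  destruct (Req_EM_T (sqrt (INR a) + sqrt (INR b)) (sqrt (INR c) + sqrt (INR d))) as [H|H].
  2: { unfold c2_term. destruct Req_EM_T; [contradiction|lra]. }
  destruct (sqrt_sum_eq_structure a b c d ltac:(lia) ltac:(lia) ltac:(lia) ltac:(lia) H) as
    [[-> ->]|[[-> ->]|(q & r1 & r2 & r3 & r4 & Hq & H1 & H2 & H3 & H4 & Ea & Eb & Ec & Ed & HS)]].
  - rewrite !Nat.eqb_refl. simpl andb. unfold guard at 1.
    pose proof (diag_term_bound c d ltac:(lia) ltac:(lia)). lra.
  - rewrite !Nat.eqb_refl. simpl andb. unfold guard at 2.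
    pose proof (diag_term_swap_bound d c ltac:(lia) ltac:(lia)). lra.
  - enough (c2_term a b c d <= offdiag_majorant N a b c d) by lra.
    subst a b c d. eapply Rle_trans; [apply offdiag_term_bound; auto|].
    pose proof (le_square_part q r1 Hq). pose proof (le_square_part q r2 Hq).
    pose proof (le_square_part q r3 Hq). pose proof (le_square_part q r4 Hq).
    assert (q <= q * (r1 * r1))%nat by (destruct r1; nia).
    eapply Rle_trans; [|apply (sum5_point N _ q r1 r2 r3 r4); auto; lia].
    unfold param_match, offdiag_weight. rewrite !Nat.eqb_refl, (proj2 (Nat.eqb_eq _ _) HS).
    simpl. lra.
Qed.

Section Summation.
Variable N : nat.
Let L := seq 1 N.

Definition sum_diag := sumR L (fun a => sumR L (fun b => diag_weight a b)).
Definition sum_side := sumR L side_weight.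
Definition sum_core := sumR L core_weight.
Definition sum_harm := sumR L (fun a => dR a * dR a * npw 1 a).

Lemma sum_side_nonneg : 0 <= sum_side.
Proof. apply sumR_nonneg; intros; apply side_weight_nonneg. Qed.

Lemma sum_core_nonneg : 0 <= sum_core.
Proof. apply sumR_nonneg; intros; apply core_weight_nonneg. Qed.

Lemma sum_harm_nonneg : 0 <= sum_harm.
Proof. apply sumR_nonneg. intros a _. pose proof (dR_nonneg a). pose proof (npw_pos 1 a). nra. Qed.

Lemma diag_part_bound (swap : bool) :
  sum4 N (fun a b c d => guard (Nat.eqb c (if swap then b else a) &&
                                Nat.eqb d (if swap then a else b)) (diag_weight a b)) <= sum_diag.
Proof.
  unfold sum4, sum_diag. apply sumR_le; intros a _. apply sumR_le; intros b _.
  pose proof (diag_weight_nonneg a b).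
  eapply Rle_trans;
    [apply sumR_le; intros c _; apply sum_guard_and_single; auto|].
  apply sum_guard_single; auto.
Qed.

(* Each parameter (q, r) is matched by exactly one quadruple (a, b, c, d). *)
Lemma offdiag_part_bound :
  sum4 N (offdiag_majorant N) <= sum5 N offdiag_weight.
Proof.
  unfold offdiag_majorant. rewrite sum4_sum5_swap.
  unfold sum5. apply sumR_le; intros q _. apply sumR_le; intros r1 _.
  apply sumR_le; intros r2 _. apply sumR_le; intros r3 _. apply sumR_le; intros r4 _.
  pose proof (offdiag_weight_nonneg q r1 r2 r3 r4).
  unfold sum4, param_match.
  eapply Rle_trans; [apply sumR_le; intros a _; apply sumR_le; intros b _;
    apply sumR_le; intros c _; apply sum_guard_and_single; auto|].
  eapply Rle_trans; [apply sumR_le; intros a _; apply sumR_le; intros b _;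
    apply sum_guard_and_single; auto|].
  eapply Rle_trans; [apply sumR_le; intros a _; apply sum_guard_and_single; auto|].
  apply sum_guard_single; auto.
Qed.

(* Given r1 + r2 = s, the pair (r3, r4) is determined by either coordinate. *)
Lemma constrained_pair_sum s X : 0 <= X ->
  sumR L (fun r3 => sumR L (fun r4 =>
    guard (Nat.eqb s (r3 + r4)) (X * (side_weight r3 + side_weight r4)))) <= 2 * X * sum_side.
Proof.
  intros HX.
  rewrite (sumR_ext _ _ (fun r3 => sumR L (fun r4 => guard (Nat.eqb s (r3 + r4)) (X * side_weight r3)) +
                                  sumR L (fun r4 => guard (Nat.eqb s (r3 + r4)) (X * side_weight r4)))).
  2: { intros r3 _. rewrite <- sumR_plus. apply sumR_ext. intros r4 _. unfold guard.
       destruct (Nat.eqb s (r3 + r4)); ring. }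
  rewrite sumR_plus, (sumR_swap L L (fun r3 r4 => guard (Nat.eqb s (r3 + r4)) (X * side_weight r4))).
  assert (A1 : sumR L (fun r3 => sumR L (fun r4 => guard (Nat.eqb s (r3 + r4)) (X * side_weight r3)))
               <= X * sum_side).
  { unfold sum_side. rewrite <- sumR_scal. apply sumR_le; intros r3 _.
    apply sumR_unique; [apply seq_NoDup | pose proof (side_weight_nonneg r3); nra |].
    intros u v _ _ Hu Hv. apply Nat.eqb_eq in Hu, Hv. lia. }
  assert (A2 : sumR L (fun r4 => sumR L (fun r3 => guard (Nat.eqb s (r3 + r4)) (X * side_weight r4)))
               <= X * sum_side).
  { unfold sum_side. rewrite <- sumR_scal. apply sumR_le; intros r4 _.
    apply sumR_unique; [apply seq_NoDup | pose proof (side_weight_nonneg r4); nra |].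
    intros u v _ _ Hu Hv. apply Nat.eqb_eq in Hu, Hv. lia. }
  lra.
Qed.

Lemma offdiag_weight_sum : sum5 N offdiag_weight <= 16 * sum_side * sum_core * sum_diag.
Proof.
  apply Rle_trans with (sumR L (fun q => sumR L (fun r1 => sumR L (fun r2 =>
     2 * (core_weight q * (8 * diag_weight r1 r2)) * sum_side)))).
  - unfold sum5. apply sumR_le; intros q _. apply sumR_le; intros r1 _. apply sumR_le; intros r2 _.
    assert (0 <= core_weight q * (8 * diag_weight r1 r2)).
    { apply Rmult_le_pos; [apply core_weight_nonneg|]. pose proof (diag_weight_nonneg r1 r2). lra. }
    unfold offdiag_weight.
    rewrite (sumR_ext _ _ (fun r3 => sumR L (fun r4 => guard (Nat.eqb (r1 + r2) (r3 + r4))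
       ((core_weight q * (8 * diag_weight r1 r2)) * (side_weight r3 + side_weight r4))))).
    2: { intros. apply sumR_ext. intros. f_equal. ring. }
    apply constrained_pair_sum; auto.
  - apply Req_le. unfold sum_core, sum_diag.
    replace (16 * sum_side * sumR L core_weight * sumR L (fun a => sumR L (fun b => diag_weight a b)))
      with (sumR L (fun q => (16 * sum_side * core_weight q) *
                             sumR L (fun a => sumR L (fun b => diag_weight a b))))
      by (rewrite sumR_scal_r, sumR_scal; ring).
    apply sumR_ext; intros q _. rewrite <- sumR_scal. apply sumR_ext; intros r1 _.
    rewrite <- sumR_scal. apply sumR_ext; intros r2 _. ring.
Qed.

Lemma sum_diag_factor : sum_diag = 4 * sum_harm * sum_side.
Proof.
  unfold sum_diag, sum_harm, sum_side, side_weight, diag_weight.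
  set (u := fun a => dR a * dR a * npw 1 a). set (v := fun a => dR a * dR a * npw (3/2) a).
  rewrite (sumR_ext _ _ (fun a => sumR L (fun b => 2 * (u a * v b) + 2 * (v a * u b)))).
  2: { intros. apply sumR_ext. intros. unfold u, v. ring. }
  rewrite (sumR_ext _ _ (fun a => 2 * (u a * sumR L v) + 2 * (v a * sumR L u))).
  2: { intros. rewrite sumR_plus, !sumR_scal, <- !sumR_scal. reflexivity. }
  rewrite sumR_plus, !sumR_scal, !sumR_scal_r. fold (sumR L u) (sumR L v). ring.
Qed.

Lemma c2_sum_bound : sum4 N c2_term <= sum_diag * (2 + 16 * sum_side * sum_core).
Proof.
  apply Rle_trans with (sum4 N (fun a b c d =>
    (guard (Nat.eqb c a && Nat.eqb d b) (diag_weight a b) +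
     guard (Nat.eqb c b && Nat.eqb d a) (diag_weight a b)) + offdiag_majorant N a b c d)).
  { apply sum4_le; intros; apply term_decomposition; auto. }
  rewrite !sum4_plus.
  pose proof (diag_part_bound false). pose proof (diag_part_bound true).
  pose proof offdiag_part_bound. pose proof offdiag_weight_sum.
  simpl in *. lra.
Qed.
End Summation.

Lemma fourth_power_le x y : 0 <= x -> x <= y -> x * x * x * x <= y * y * y * y.
Proof. intros. assert (0 <= x * x) by nra. assert (x * x <= y * y) by nra. nra. Qed.

Lemma sum_harm_bound N : (1 <= N)%nat -> sum_harm N <= (1 + ln (INR N)) ^ 4.
Proof.
  intros HN. unfold sum_harm.
  eapply Rle_trans; [apply divisor_sq_moment; [intros; apply npw_pos | apply npw_mul]|].
  replace ((1 + ln (INR N)) ^ 4) with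
    ((1 + ln (INR N)) * (1 + ln (INR N)) * (1 + ln (INR N)) * (1 + ln (INR N))) by ring.
  apply fourth_power_le; [apply weight_sum_nonneg; intros; apply npw_pos|].
  apply harmonic_bound; auto.
Qed.

(* sum_r d(r)^2 r^(-3/2) <= zeta(3/2)^4 <= 3^4. *)
Lemma sum_side_bound N : sum_side N <= 81.
Proof.
  unfold sum_side, side_weight.
  eapply Rle_trans; [apply divisor_sq_moment; [intros; apply npw_pos | apply npw_mul]|].
  replace 81 with (3 * 3 * 3 * 3) by ring.
  apply fourth_power_le; [apply weight_sum_nonneg; intros; apply npw_pos|].
  eapply Rle_trans; [apply zeta_bound; lra|]. apply Req_le. field.
Qed.

(* sum_q d(q)^4 q^(-5/2) <= (sum_q d(q)^2 q^(-5/4))^2 <= zeta(5/4)^8 <= 5^8. *)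
Lemma sum_core_bound N : sum_core N <= 5 ^ 8.
Proof.
  set (u := fun q => dR q * dR q * npw (5/4) q).
  assert (Hu : forall q, 0 <= u q).
  { intros. unfold u. pose proof (dR_nonneg q). pose proof (npw_pos (5/4) q). nra. }
  assert (Hsplit : sum_core N = sumR (seq 1 N) (fun q => u q * u q)).
  { unfold sum_core. apply sumR_ext. intros q _. unfold core_weight, u.
    replace (5/2) with (2 * (5/4)) by field. rewrite npw_double. ring. }
  assert (Hmoment : sumR (seq 1 N) u <= 5 * 5 * 5 * 5).
  { unfold u. eapply Rle_trans; [apply divisor_sq_moment; [intros; apply npw_pos | apply npw_mul]|].
    apply fourth_power_le; [apply weight_sum_nonneg; intros; apply npw_pos|].
    eapply Rle_trans; [apply zeta_bound; lra|]. apply Req_le. field. }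
  assert (0 <= sumR (seq 1 N) u) by (apply sumR_nonneg; auto).
  rewrite Hsplit. eapply Rle_trans; [apply sumR_sq_le; auto|].
  replace (5 ^ 8) with ((5 * 5 * 5 * 5) * (5 * 5 * 5 * 5)) by ring.
  apply Rmult_le_compat; auto.
Qed.

Definition c2_constant : R := 4 * 81 * (2 + 16 * 81 * 5 ^ 8).

Lemma c2_sum_log_bound N : (1 <= N)%nat -> sum4 N c2_term <= c2_constant * (1 + ln (INR N)) ^ 4.
Proof.
  intros HN.
  pose proof (c2_sum_bound N) as Hsum. rewrite sum_diag_factor in Hsum.
  pose proof (sum_harm_bound N HN). pose proof (sum_side_bound N). pose proof (sum_core_bound N).
  pose proof (sum_harm_nonneg N). pose proof (sum_side_nonneg N). pose proof (sum_core_nonneg N).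
  assert (Hlog : 0 <= (1 + ln (INR N)) ^ 4) by lra.
  eapply Rle_trans; [exact Hsum|]. unfold c2_constant.
  assert (sum_side N * sum_core N <= 81 * 5 ^ 8) by (apply Rmult_le_compat; auto).
  assert (4 * sum_harm N * sum_side N <= 4 * (1 + ln (INR N)) ^ 4 * 81).
  { apply Rmult_le_compat; auto; nra. }
  apply Rle_trans with ((4 * (1 + ln (INR N)) ^ 4 * 81) * (2 + 16 * 81 * 5 ^ 8)).
  - apply Rmult_le_compat; nra.
  - apply Req_le. ring.
Qed.

Lemma c2_term_nonneg a b c d : 0 <= c2_term a b c d.
Proof.
  unfold c2_term. destruct Req_EM_T; [|lra].
  unfold Rdiv. apply Rmult_le_pos; [apply Rmult_le_pos|].
  - apply pos_INR.
  - pose proof (sqrt_pos (INR a)). pose proof (sqrt_pos (INR b)).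
    pose proof (sqrt_pos (INR c)). pose proof (sqrt_pos (INR d)). lra.
  - left. apply Rinv_0_lt_compat, Rpower_pos.
Qed.

Lemma ln_monotone x y : 0 < x -> x <= y -> ln x <= ln y.
Proof.
  intros Hx Hxy. destruct (Req_dec x y) as [E|E]; [rewrite E; lra|].
  apply Rlt_le, ln_increasing; lra.
Qed.

Lemma floor_log_bound z : 10 <= z ->
  (1 <= nfloor z)%nat /\ 0 <= 1 + ln (INR (nfloor z)) <= 2 * ln z.
Proof.
  intros Hz. destruct (base_Int_part z) as [B1 B2].
  assert (HI : (0 <= Int_part z)%Z) by (apply le_IZR; lra).
  assert (HN : INR (nfloor z) = IZR (Int_part z))
    by (unfold nfloor; rewrite INR_IZR_INZ, Z2Nat.id; auto).
  assert (HN1 : (1 <= nfloor z)%nat) by (apply INR_le; rewrite HN; simpl; lra).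
  assert (Hpos : 0 <= ln (INR (nfloor z)))
    by (rewrite <- ln_1; apply ln_monotone; [lra | apply (le_INR 1); auto]).
  assert (Hz1 : 1 <= ln z).
  { rewrite <- (ln_exp 1) at 1. pose proof exp_le_3. apply ln_monotone; [apply exp_pos | lra]. }
  assert (ln (INR (nfloor z)) <= ln z) by (apply ln_monotone; [apply INR_pos | lra]; auto).
  repeat split; auto; lra.
Qed.

Theorem lemma4p3 :
  exists C : R, 0 < C /\
    forall z : R, 10 <= z -> Rabs (c2 z) <= C * (ln z) ^ 4.
Proof.
  exists (16 * c2_constant). split; [unfold c2_constant; lra|].
  intros z Hz.
  destruct (floor_log_bound z Hz) as [HN Hlog].
  change (c2 z) with (sum4 (nfloor z) c2_term).
  rewrite Rabs_right by (apply Rle_ge, sum4_nonneg, c2_term_nonneg).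
  eapply Rle_trans; [apply c2_sum_log_bound; auto|].
  assert ((1 + ln (INR (nfloor z))) ^ 4 <= (2 * ln z) ^ 4) by (apply pow_incr; lra).
  unfold c2_constant in *. nra.
Qed.
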